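(* Let $n,m$ be positive integers, $A_1,\dots,A_m\in\mathbb{S}_n$, $\mathcal{A}(X)=(\langle A_i,X\rangle)_{i=1}^m$, $\mathcal{A}^*(y)=\sum_i y_iA_i$, with $\mathcal{A}\mathcal{A}^*$ invertible; let $b\in\mathbb{R}^m$, $C\in\mathbb{S}_n$, $D:=\mathcal{A}^*((\mathcal{A}\mathcal{A}^* )^{-1}b)$, $\mathcal{M}=\{S\in\mathbb{S}_n^+:\operatorname{diag}(S)=\mathbf{1}\}$, and $$L_\sigma(S,y,\widetilde{X})=\langle D,S+C\rangle-\langle\widetilde{X},\mathcal{A}^*(y)-S-C\rangle+\tfrac{\sigma}{2}\|\mathcal{A}^*(y)-S-C\|^2 .$$ Let $y^0\in\mathbb{R}^m$, $\widetilde{X}^0\in\mathbb{S}_n$, let $\sigma_k>0$ for all $k\ge0$, and for $k=0,1,2,\dots$ let $S^{k+1}\in\arg\min_{S\in\mathcal{M}}L_{\sigma_k}(S,y^k,\widetilde{X}^k)$, $y^{k+1}\in\arg\min_{y\in\mathbb{R}^m}L_{\sigma_k}(S^{k+1},y,\widetilde{X}^k)$, and $\widetilde{X}^{k+1}=\widetilde{X}^k-\sigma_k(\mathcal{A}^*(y^{k+1})-S^{k+1}-C)$. Then $\mathcal{A}(\widetilde{X}^{k+1})=0$ for every $k\ge0$. Moreover, for every $k\ge1$, the subproblem $\min_{y\in\mathbb{R}^m}L_{\sigma_k}(S^{k+1},y,\widetilde{X}^k)$ has the closed-form solution $y^{k+1}=(\mathcal{A}\mathcal{A}^* )^{-1}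\mathcal{A}(S^{k+1}+C)$.
   Context: $\mathbb{S}_n$ ($\mathbb{S}_n^+$) denotes real symmetric (positive semidefinite) $n\times n$ matrices, $\langle A,B\rangle=\mathrm{Tr}(A^{\intercal}B)$, $\|\cdot\|$ the Frobenius norm, $\operatorname{diag}(S)$ the vector of diagonal entries, $\mathbf{1}$ the all-ones vector. *)

From HB Require Import structures.
From mathcomp Require Import all_boot all_order all_algebra.
From mathcomp Require Import reals.
Set Implicit Arguments. Unset Strict Implicit. Unset Printing Implicit Defensive.
Import Order.TTheory GRing.Theory Num.Theory.
Local Open Scope ring_scope.

Section Defs.
Variable R : realType.

Definition mxinner (n : nat) (A B : 'M[R]_n) : R := \tr (A^T *m B).

Definition frob_sq (n : nat) (A : 'M[R]_n) : R := mxinner A A.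

Definition symmx (n : nat) (S : 'M[R]_n) : Prop := S^T = S.

Definition psd (n : nat) (S : 'M[R]_n) : Prop :=
  symmx S /\ forall x : 'cV[R]_n, 0 <= (x^T *m S *m x) 0 0.

Definition Aop (n m : nat) (A : 'I_m -> 'M[R]_n) (X : 'M[R]_n) : 'cV[R]_m :=
  \col_i mxinner (A i) X.

Definition Aadj (n m : nat) (A : 'I_m -> 'M[R]_n) (y : 'cV[R]_m) : 'M[R]_n :=
  \sum_i y i 0 *: A i.

(* matrix of the operator AopAadj : R^m -> R^m *)
Definition AAadj (n m : nat) (A : 'I_m -> 'M[R]_n) : 'M[R]_m :=
  \matrix_(i, j) mxinner (A i) (A j).

Definition elliptope (n : nat) (S : 'M[R]_n) : Prop :=
  psd S /\ forall i, S i i = 1.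

Definition Dmat (n m : nat) (A : 'I_m -> 'M[R]_n) (b : 'cV[R]_m) : 'M[R]_n :=
  Aadj A (invmx (AAadj A) *m b).

Definition Lag (n m : nat) (A : 'I_m -> 'M[R]_n) (b : 'cV[R]_m) (C : 'M[R]_n)
  (sigma : R) (S : 'M[R]_n) (y : 'cV[R]_m) (Xt : 'M[R]_n) : R :=
  mxinner (Dmat A b) (S + C) - mxinner Xt (Aadj A y - S - C)
  + sigma / 2 * frob_sq (Aadj A y - S - C).

End Defs.

(* The y-subproblem is an unconstrained convex quadratic, so along every
   coordinate direction e_i the augmented Lagrangian is a quadratic in the step
   t minimised at t = 0; its linear coefficient must vanish, which is the
   optimality condition  sigma_k A(A*(y^{k+1}) - S^{k+1} - C) = A(X~^k).
   The multiplier update then gives A(X~^{k+1}) = A(X~^k) - A(X~^k) = 0.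
   For k >= 1 the left side A(X~^k) is already 0, so the same condition reads
   AA* y^{k+1} = A(S^{k+1} + C). *)

From HB Require Import structures.
From mathcomp Require Import all_boot all_order all_algebra.
From mathcomp Require Import reals.
From mathcomp Require Import ring lra.
Import Order.TTheory GRing.Theory Num.Theory.
Set Implicit Arguments. Unset Strict Implicit. Unset Printing Implicit Defensive.
Local Open Scope ring_scope.

Section Inner.
Variables (R : realType) (n : nat).
Implicit Types A B M N : 'M[R]_n.

Lemma mxinnerC A B : mxinner A B = mxinner B A.
Proof. by rewrite /mxinner -mxtrace_tr trmx_mul trmxK. Qed.

Fact mxinner_is_linear A : linear_for *%R (@mxinner R n A).
Proof. by move=> t B C; rewrite /mxinner mulmxDr -scalemxAr mxtraceD mxtraceZ. Qed.

HB.instance Definition _ A :=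
  GRing.isLinear.Build R 'M[R]_n R *%R (@mxinner R n A) (mxinner_is_linear A).

Lemma mxinnerDl A B C : mxinner (A + B) C = mxinner A C + mxinner B C.
Proof. by rewrite mxinnerC linearD /= !(mxinnerC C). Qed.

Lemma mxinnerZl A B t : mxinner (t *: A) B = t * mxinner A B.
Proof. by rewrite mxinnerC linearZ /= mxinnerC. Qed.

Lemma frob_sqDZ M N t :
  frob_sq (M + t *: N) = frob_sq M + t * (2 * mxinner M N) + t ^+ 2 * frob_sq N.
Proof. by rewrite /frob_sq !mxinnerDl !mxinnerZl !linearD !linearZ /= (mxinnerC N M); ring. Qed.

End Inner.

Lemma lin_coef_eq0_of_quad_ge0 (R : realFieldType) (g c : R) :
  (forall t, 0 <= t * g + t ^+ 2 * c) -> g = 0.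
Proof.
move=> quad_ge0.
have c_ge0 : 0 <= c by have := quad_ge0 1; have := quad_ge0 (-1); rewrite !expr2; lra.
have c1_gt0 : 0 < c + 1 by lra.
(* At t = -g/(c+1) the quadratic equals -g^2/(c+1)^2. *)
set u := - g / (c + 1).
have u_def : u * (c + 1) = - g by rewrite mulfVK ?gt_eqF.
have key : (c + 1) ^+ 2 * (u * g + u ^+ 2 * c) = - g ^+ 2.
  have -> : (c + 1) ^+ 2 * (u * g + u ^+ 2 * c)
          = u * (c + 1) * g * (c + 1) + (u * (c + 1)) ^+ 2 * c by ring.
  by rewrite u_def; ring.
have := mulr_ge0 (sqr_ge0 (c + 1)) (quad_ge0 u).
rewrite key oppr_ge0 => g2_le0.
by apply/eqP; rewrite -sqrf_eq0 eq_le g2_le0 sqr_ge0.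
Qed.

Section Operators.
Variables (R : realType) (n m : nat) (A : 'I_m -> 'M[R]_n).

Fact Aop_is_linear : linear (Aop A).
Proof. by move=> t X Y; apply/matrixP => i j; rewrite !mxE linearP. Qed.

HB.instance Definition _ :=
  GRing.isLinear.Build R 'M[R]_n 'cV[R]_m _ (Aop A) Aop_is_linear.

Fact Aadj_is_linear : linear (Aadj A).
Proof.
move=> t y z; rewrite /Aadj scaler_sumr -big_split /=; apply: eq_bigr => i _.
by rewrite !mxE scalerDl scalerA.
Qed.

HB.instance Definition _ :=
  GRing.isLinear.Build R 'cV[R]_m 'M[R]_n _ (Aadj A) Aadj_is_linear.

Lemma Aadj_delta i : Aadj A (delta_mx i 0) = A i.
Proof.
rewrite /Aadj (bigD1 i) //= big1 => [|j /negbTE neq_ji]; last by rewrite mxE neq_ji scale0r.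
by rewrite mxE !eqxx scale1r addr0.
Qed.

Lemma Aop_Aadj y : Aop A (Aadj A y) = AAadj A *m y.
Proof.
apply/matrixP => i j; rewrite ord1 !mxE /Aadj linear_sum /=.
by apply: eq_bigr => k _; rewrite linearZ /= !mxE mulrC.
Qed.

End Operators.

Section Lagrangian.
Variables (R : realType) (n m : nat) (A : 'I_m -> 'M[R]_n) (b : 'cV[R]_m) (C : 'M[R]_n).
Local Notation L := (Lag A b C).

Lemma Lag_shift_y s S y d X t :
  L s S (y + t *: d) X = L s S y X
    + t * (s * mxinner (Aadj A y - S - C) (Aadj A d) - mxinner X (Aadj A d))
    + t ^+ 2 * (s / 2 * frob_sq (Aadj A d)).
Proof.
rewrite /Lag (raddfD (Aadj A)) /= linearZ.
have -> : Aadj A y + t *: Aadj A d - S - C = (Aadj A y - S - C) + t *: Aadj A d.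
  by rewrite -!addrA; congr (_ + _); rewrite addrC -!addrA.
by rewrite frob_sqDZ (raddfD (mxinner X)) /= linearZ /=; field.
Qed.

Lemma Lag_argmin_y s S y X : (forall y', L s S y X <= L s S y' X) ->
  Aop A X = s *: Aop A (Aadj A y - S - C).
Proof.
move=> y_min; apply/matrixP => i j; rewrite ord1 !mxE; apply/eqP.
rewrite eq_sym -subr_eq0 !(mxinnerC (A i)); apply/eqP.
apply: (@lin_coef_eq0_of_quad_ge0 _ _ (s / 2 * frob_sq (A i))) => t.
by have := y_min (y + t *: delta_mx i 0); rewrite Lag_shift_y Aadj_delta; lra.
Qed.

End Lagrangian.

Theorem lemma3p1 (R : realType) (n m : nat) (hn : (0 < n)%N) (hm : (0 < m)%N)
  (A : 'I_m -> 'M[R]_n) (hA : forall i, symmx (A i))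
  (hinv : AAadj A \in unitmx)
  (b : 'cV[R]_m) (C : 'M[R]_n) (hC : symmx C)
  (sigma : nat -> R) (hsigma : forall k, 0 < sigma k)
  (Sseq : nat -> 'M[R]_n) (yseq : nat -> 'cV[R]_m) (Xseq : nat -> 'M[R]_n)
  (hX0 : symmx (Xseq 0%N))
  (hS : forall k, elliptope (Sseq k.+1) /\
     forall S, elliptope S ->
       Lag A b C (sigma k) (Sseq k.+1) (yseq k) (Xseq k)
       <= Lag A b C (sigma k) S (yseq k) (Xseq k))
  (hy : forall k, forall y : 'cV[R]_m,
       Lag A b C (sigma k) (Sseq k.+1) (yseq k.+1) (Xseq k)
       <= Lag A b C (sigma k) (Sseq k.+1) y (Xseq k))
  (hXup : forall k, Xseq k.+1 =
       Xseq k - sigma k *: (Aadj A (yseq k.+1) - Sseq k.+1 - C)) :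
  (forall k, Aop A (Xseq k.+1) = 0) /\
  (forall k, (1 <= k)%N ->
     yseq k.+1 = invmx (AAadj A) *m Aop A (Sseq k.+1 + C)).
Proof.
have first_order k := Lag_argmin_y (hy k).
have dual_feasible k : Aop A (Xseq k.+1) = 0.
  by rewrite hXup linearB linearZ /= -first_order subrr.
split=> // -[|k] // _.
have : sigma k.+1 *: Aop A (Aadj A (yseq k.+2) - Sseq k.+2 - C) = 0.
  by rewrite -first_order dual_feasible.
move/eqP; rewrite scaler_eq0 (gt_eqF (hsigma _)) /= -addrA -opprD linearB /=.
by rewrite Aop_Aadj subr_eq0 => /eqP <-; rewrite mulKmx.
Qed.
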